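(* Every fully $\mathrm{A}^{+1}$-representable finite distributive lattice is planar.
   Context: For a finite lattice $D$, $J(D)$ is the set of nonzero join-irreducible elements and $J^+(D)=J(D)\cup\{0,1\}$. For an algebra $A$, $\mathrm{Con}(A)$ is its congruence lattice and $\mathrm{Princ}(A)$ its set of principal congruences. $D$ is fully $\mathrm{A}^{+1}$-representable if for every $Q$ with $J^+(D)\subseteq Q\subseteq D$ there exist an algebra $A$ and a lattice isomorphism $\phi\colon\mathrm{Con}(A)\to D$ with $\phi(\mathrm{Princ}(A))=Q$. A lattice is planar if it is finite and has a planar Hasse diagram. *)

From HB Require Import structures.
From mathcomp Require Import all_boot all_order.
From Stdlib Require Import Reals.
Set Implicit Arguments. Unset Strict Implicit. Unset Printing Implicit Defensive.
Import Order.Theory.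
Local Open Scope order_scope.

Definition join_irr {d} {D : finTBDistrLatticeType d} (x : D) : Prop :=
  x <> \bot /\ forall y z : D, x = y `|` z -> x = y \/ x = z.

Definition Jplus {d} {D : finTBDistrLatticeType d} (x : D) : Prop :=
  join_irr x \/ x = \bot \/ x = \top.

Record algebra := Algebra {
  carrier : Type;
  some_elem : carrier;
  op_index : Type;
  arity : op_index -> nat;
  op : forall i : op_index, ('I_(arity i) -> carrier) -> carrier
}.

Definition is_congruence (A : algebra) (R : carrier A -> carrier A -> Prop) : Prop :=
  (forall x, R x x) /\
  (forall x y, R x y -> R y x) /\
  (forall x y z, R x y -> R y z -> R x z) /\
  (forall (i : op_index A) (u v : 'I_(arity i) -> carrier A),
      (forall k, R (u k) (v k)) -> R (op u) (op v)).

Definition princ (A : algebra) (a b : carrier A) : carrier A -> carrier A -> Prop :=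
  fun x y => forall R, is_congruence R -> R a b -> R x y.

(* phi restricted to Con(A) is a lattice isomorphism Con(A) -> D
   (Con(A) ordered by inclusion; an order isomorphism between lattices
   is the same as a lattice isomorphism). *)
Definition con_iso (A : algebra) {d} {D : finTBDistrLatticeType d}
    (phi : (carrier A -> carrier A -> Prop) -> D) : Prop :=
  (forall R S, is_congruence R -> is_congruence S ->
     ((forall x y, R x y -> S x y) <-> phi R <= phi S)) /\
  (forall q : D, exists R, is_congruence R /\ phi R = q).

Definition fully_A1_representable {d} (D : finTBDistrLatticeType d) : Prop :=
  forall Q : {set D}, (forall x : D, Jplus x -> x \in Q) ->
  exists (A : algebra) (phi : (carrier A -> carrier A -> Prop) -> D),
    con_iso phi /\
    (forall q : D, q \in Q <-> exists a b : carrier A, phi (princ a b) = q).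

Definition point := (R * R)%type.

Definition on_segment (p a b : point) : Prop :=
  exists t : R, Rle R0 t /\ Rle t R1 /\
    p = (Rplus (fst a) (Rmult t (Rminus (fst b) (fst a))),
         Rplus (snd a) (Rmult t (Rminus (snd b) (snd a)))).

Definition covers {d} {D : finTBDistrLatticeType d} (a b : D) : Prop :=
  a < b /\ forall c : D, ~ (a < c /\ c < b).

Definition planar {d} (D : finTBDistrLatticeType d) : Prop :=
  exists f : D -> point,
    injective f /\
    (forall x y : D, x < y -> Rlt (snd (f x)) (snd (f y))) /\
    (forall v a b : D, covers a b -> on_segment (f v) (f a) (f b) ->
        v = a \/ v = b) /\
    (forall a b c e : D, covers a b -> covers c e -> (a, b) <> (c, e) ->
       forall p, on_segment p (f a) (f b) -> on_segment p (f c) (f e) ->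
         exists x : D, (x = a \/ x = b) /\ (x = c \/ x = e) /\ p = f x).

(* Suppose J(D) contains an antichain {a, b, c} and put w := a | b | c. Represent
   Q := J^+(D) plus w: then w is the image of some con(x0, y0), and since the congruences
   mapped to a, b, c generate a congruence above w, x0 is joined to y0 by a chain of steps,
   each inside one of these congruences. Along the chain the image of con(x0, z) stays below
   w and above at most one of a, b, c: the next image lies in Q and below the previous one
   joined with a, b or c, which by join-primality of a, b, c is not above w, so the next
   image is join-irreducible or 0. At z = y0 the image is w itself, a contradiction.
   So J(D) has width 2 and, by Dilworth, is the disjoint union of two chains C1 and C2. The
   map x |-> (#{p in C1 | p <= x}, #{p in C2 | p <= x}) is injective and turns covering
   pairs into unit steps of N^2; the grid rotated by 45 degrees is a planar Hasse diagram. *)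

From Stdlib Require Import Relations FunctionalExtensionality Reals Lra Lia.
From HB Require Import structures.
From mathcomp Require Import all_boot all_order.
Set Implicit Arguments. Unset Strict Implicit. Unset Printing Implicit Defensive.
Import Order.Theory.

Section Dilworth2.
Context {d : Order.disp_t} {T : finPOrderType d}.
Local Open Scope order_scope.
Implicit Types (x y m : T) (S C L X : {set T}).

Definition chain C := {in C &, forall x y, x >=< y}.
Definition width2 S := {in S & &, forall x y z, [|| x >=< y, y >=< z | x >=< z]}.
Definition two_chain_cover S :=
  exists C1 C2 : {set T}, [/\ chain C1, chain C2, [disjoint C1 & C2] & S = C1 :|: C2].

Lemma sub_chain (C1 C2 : {set T}) : C1 \subset C2 -> chain C2 -> chain C1.
Proof. by move=> /subsetP sub ch x y /sub xC /sub; apply: ch. Qed.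

Lemma exists_maximal X : X != set0 ->
  exists2 t, t \in X & {in X, forall x, x >=< t -> x <= t}.
Proof.
case/set0Pn => x0 x0X.
have [t tX tmax] := arg_maxnP (fun x => #|[set z | z <= x]|) x0X.
exists t => // x xX /orP[//|tx].
have sub : [set z | z <= t] \subset [set z | z <= x].
  by apply/subsetP => z; rewrite !inE => /le_trans; apply.
have /eqP/setP/(_ x) : [set z | z <= t] == [set z | z <= x].
  by rewrite eqEcard sub; apply: tmax.
by rewrite !inE lexx => ->.
Qed.

Lemma chain_max X : chain X -> X != set0 -> exists2 t, t \in X & {in X, forall x, x <= t}.
Proof.
move=> ch /exists_maximal[t tX tmax]; exists t => // x xX.
by apply: tmax xX (ch x t xX tX).
Qed.

(* The lower part [L] of [C1] joins the new element [m]; the rest of [C1] goes with [C2]. *)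
Lemma two_chain_cover_add S (C1 C2 : {set T}) L m : S :\ m = C1 :|: C2 -> m \in S ->
  chain C1 -> chain C2 -> L \subset C1 -> {in L, forall x, x <= m} ->
  {in C1 :\: L & C2, forall x y, x >=< y} -> two_chain_cover S.
Proof.
move=> Sm mS ch1 ch2 /subsetP LC1 Lm good.
have C1S : C1 \subset S.
  by apply/subsetP => x xC1; have /setD1P[] : x \in S :\ m by rewrite Sm inE xC1.
exists (m |: L), (S :\: (m |: L)); split.
- move=> x y; rewrite !inE => /predU1P[->|xL] /predU1P[->|yL].
  + exact: comparablexx.
  + exact/ge_comparable/Lm.
  + exact/le_comparable/Lm.
  + exact: ch1 (LC1 x xL) (LC1 y yL).
- have rest x : x \in S :\: (m |: L) -> (x \in C1 :\: L) || (x \in C2).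
    rewrite !inE negb_or => /andP[/andP[xm xL] xS].
    have : x \in S :\ m by rewrite !inE xm xS.
    by rewrite Sm inE => /orP[xC1|->]; rewrite ?orbT // xL xC1.
  move=> x y /rest/orP[x1|x2] /rest/orP[y1|y2].
  + by move: x1 y1 => /setDP[x1 _] /setDP[y1 _]; apply: ch1.
  + exact: good.
  + by rewrite comparable_sym; apply: good.
  + exact: ch2.
- by rewrite disjoint_sym; apply/setDidPl; rewrite setDDl setUid.
- rewrite -{1}(setID S (m |: L)) (setIidPr _) //; apply/subsetP => x /setU1P[->//|/LC1].
  exact: (subsetP C1S).
Qed.

Lemma incomparable_below (C1 C2 : {set T}) : chain C1 ->
  [exists u in C1, exists v in C2, ~~ (u >=< v)] ->
  exists x, [/\ x \in C1, exists2 y, y \in C2 & ~~ (x >=< y)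
                & {in C1 & C2, forall u v, ~~ (u >=< v) -> u <= x}].
Proof.
pose X := [set u in C1 | [exists v in C2, ~~ (u >=< v)]] => ch1 bad.
have XC1 : X \subset C1 by apply/subsetP => u; rewrite inE => /andP[].
have X0 : X != set0.
  by case/exists_inP: bad => u uC1 nuv; apply/set0Pn; exists u; rewrite inE uC1.
have [x xX xmax] := chain_max (sub_chain XC1 ch1) X0.
move: (xX); rewrite inE => /andP[xC1 /exists_inP[y yC2 nxy]].
exists x; split=> // [|u v uC1 vC2 nuv]; first by exists y.
by apply: xmax; rewrite inE uC1; apply/exists_inP; exists v.
Qed.

Lemma two_chain_cover_step S (C1 C2 : {set T}) m : width2 S -> m \in S ->
  {in S, forall y, y >=< m -> y <= m} -> S :\ m = C1 :|: C2 ->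
  chain C1 -> chain C2 -> two_chain_cover S.
Proof.
move=> wS mS mmax Sm ch1 ch2.
have below x (C C' : {set T}) : S :\ m = C :|: C' -> chain C -> chain C' ->
    x \in C -> x >=< m -> {in C & C', forall u v, ~~ (u >=< v) -> u <= x} ->
    two_chain_cover S.
  move=> SmC ch ch' xC xm xmax.
  have xS : x \in S by have /setD1P[] : x \in S :\ m by rewrite SmC inE xC.
  apply: (two_chain_cover_add (L := [set z in C | z <= x]) SmC mS ch ch').
  - by apply/subsetP => z; rewrite inE => /andP[].
  - by move=> z; rewrite inE => /andP[_ /le_trans]; apply; apply: mmax.
  - move=> u v /setDP[uC]; rewrite inE uC /= => nux vC'; apply: contraT => nuv.
    by rewrite (xmax u v) in nux.
case: (boolP [exists u in C1, exists v in C2, ~~ (u >=< v)]) => [bad|good]; last first.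
  apply: (two_chain_cover_add (L := set0) Sm mS ch1 ch2).
  - exact: sub0set.
  - by move=> u; rewrite inE.
  - move=> u v /setDP[uC1 _] vC2; apply: contraNT good => nuv.
    by apply/exists_inP; exists u => //; apply/exists_inP; exists v.
(* [x1] and [x2] are incomparable, so by width 2 one of them lies below [m]. *)
have [x1 [x1C1 [y yC2 nx1y] x1max]] := incomparable_below ch1 bad.
have [x2 [x2C2 [x xC1 nx2x] x2max]] : exists x2, [/\ x2 \in C2,
    exists2 x, x \in C1 & ~~ (x2 >=< x)
    & {in C2 & C1, forall u v, ~~ (u >=< v) -> u <= x2}].
  apply: incomparable_below ch2 _; apply/exists_inP; exists y => //.
  by apply/exists_inP; exists x1; rewrite // comparable_sym.
have n12 : ~~ (x1 >=< x2).
  apply/negP => /orP[le12|le21].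
  - have := x1max x x2 xC1 x2C2; rewrite comparable_sym => /(_ nx2x) le_x1.
    by move: nx2x; rewrite (ge_comparable (le_trans le_x1 le12)).
  - have := x2max y x1 yC2 x1C1; rewrite comparable_sym => /(_ nx1y) le_y2.
    by move: nx1y; rewrite (ge_comparable (le_trans le_y2 le21)).
have x1S : x1 \in S by have /setD1P[] : x1 \in S :\ m by rewrite Sm inE x1C1.
have x2S : x2 \in S by have /setD1P[] : x2 \in S :\ m by rewrite Sm inE x2C2 orbT.
move: (wS x1 x2 m x1S x2S mS); rewrite (negbTE n12) /= => /orP[x2m|x1m].
- by apply: (below x2 C2 C1) => //; rewrite setUC.
- exact: (below x1 C1 C2).
Qed.

Lemma dilworth2 S : width2 S -> two_chain_cover S.
Proof.
have [n] := ubnP #|S|; elim: n S => // n IH S /ltnSE leSn wS.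
have [->|S0] := eqVneq S set0.
  by exists set0, set0; split; rewrite ?setU0 -?setI_eq0 ?setI0 // => x y; rewrite inE.
have [m mS mmax] := exists_maximal S0.
have [||C1 [C2 [ch1 ch2 _ Sm]]] := IH (S :\ m).
- by move: leSn; rewrite (cardsD1 m) mS.
- by move=> x y z /setD1P[_ xS] /setD1P[_ yS] /setD1P[_ zS]; apply: wS.
- exact: two_chain_cover_step wS mS mmax Sm ch1 ch2.
Qed.

End Dilworth2.

Section JoinIrreducible.
Context {d : Order.disp_t} {D : finTBDistrLatticeType d}.
Local Open Scope order_scope.
Implicit Types x y z p q : D.

Definition join_irrb x : bool := (x != \bot) &&
  [forall y, [forall z, (x == y `|` z) ==> (x == y) || (x == z)]].

Lemma join_irrP x : reflect (join_irr x) (join_irrb x).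
Proof.
apply: (iffP andP) => [[/eqP x0 /forallP irr]|[x0 irr]].
  split=> // y z xE; have /forallP/(_ z) := irr y.
  by rewrite -xE eqxx => /orP[]/eqP; [left|right].
split; first exact/eqP.
apply/forallP => y; apply/forallP => z; apply/implyP => /eqP/irr.
by case=> <-; rewrite eqxx ?orbT.
Qed.

(* By distributivity [p = (p `&` y) `|` (p `&` z)] whenever [p <= y `|` z]. *)
Lemma join_irr_prime p y z : join_irrb p -> p <= y `|` z -> (p <= y) || (p <= z).
Proof.
case/andP=> _ /forallP/(_ (p `&` y))/forallP/(_ (p `&` z)).
rewrite -meetUr => irr /meet_idPl pyz; move: irr; rewrite pyz eqxx /=.
by case/orP=> /eqP pE; apply/orP; [left|right]; apply/meet_idPl; rewrite -pE.
Qed.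

Lemma le_join_irr x y :
  (forall p, join_irrb p -> p <= x -> p <= y) -> x <= y.
Proof.
have [n] := ubnP #|[set z | z < x]|; elim: n x => // n IH x /ltnSE ltn xy.
have [jx|njx] := boolP (join_irrb x); first exact: xy.
have [->|x0] := eqVneq x \bot; first exact: le0x.
move: njx; rewrite /join_irrb x0 => /forallPn[u /forallPn[v]].
rewrite negb_imply negb_or => /andP[/eqP xE /andP[xu xv]].
have ltx t : t <= x -> t != x -> #|[set z | z < t]| < n.
  move=> tx nxt; apply: leq_trans ltn; apply/proper_card/properP; split.
    by apply/subsetP => s; rewrite !inE => st; apply: lt_le_trans st tx.
  by exists t; rewrite !inE ?ltxx // lt_neqAle nxt tx.
have below t : t <= x -> t != x -> t <= y.
  move=> tx nxt; apply: IH (ltx t tx nxt) _ => p jp pt.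
  by apply: xy => //; apply: le_trans pt tx.
have ux : u <= x by rewrite xE leUl.
have vx : v <= x by rewrite xE leUr.
by rewrite xE leUx !below // eq_sym.
Qed.

End JoinIrreducible.

Section Covers.
Context {d : Order.disp_t} {D : finTBDistrLatticeType d}.
Local Open Scope order_scope.
Implicit Types x y a b p q : D.

Lemma covers_join a b y : covers a b -> y <= b -> ~~ (y <= a) -> a `|` y = b.
Proof.
move=> [ab nmid] yb nya; apply/eqP; apply: contraT => ne; exfalso; apply: (nmid (a `|` y)).
split; last by rewrite lt_neqAle ne leUx (ltW ab) yb.
by rewrite lt_neqAle leUl andbT; apply: contra nya => /eqP->; rewrite leUr.
Qed.

Lemma covers_join_irr a b : covers a b -> exists p, [/\ join_irrb p, ~~ (p <= a) &
  forall q, join_irrb q -> (q <= b) = (q <= a) || (q == p)].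
Proof.
move=> cov; have [ab _] := cov.
have [p [jp pb npa]] : exists p, [/\ join_irrb p, p <= b & ~~ (p <= a)].
  case: (boolP [exists p, [&& join_irrb p, p <= b & ~~ (p <= a)]]) => [|none].
    by case/existsP=> p /and3P[]; exists p.
  suff : b <= a by rewrite lt_geF.
  apply: le_join_irr => p jp pb; apply: contraNT none => npa.
  by apply/existsP; exists p; rewrite jp pb.
exists p; split=> // q jq; apply/idP/idP => [qb|/orP[qa|/eqP->//]]; last first.
  exact: le_trans qa (ltW ab).
apply/orP; case: (boolP (q <= a)) => [|nqa]; [by left | right].
have qp : q <= p.
  have qap : q <= a `|` p by rewrite (covers_join cov pb npa).
  by move: (join_irr_prime jq qap); rewrite (negbTE nqa).
have paq : p <= a `|` q by rewrite (covers_join cov qb nqa).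
by rewrite eq_le qp /=; move: (join_irr_prime jp paq); rewrite (negbTE npa).
Qed.

Definition rank_in (C : {set D}) x := #|[set p in C | p <= x]|.

Lemma rank_in_le (C : {set D}) x y : x <= y -> rank_in C x <= rank_in C y.
Proof.
move=> xy; apply/subset_leq_card/subsetP => p; rewrite !inE => /andP[-> px].
exact: le_trans px xy.
Qed.

Lemma chain_rank_inj (C : {set D}) x y : chain C -> rank_in C x = rank_in C y ->
  [set p in C | p <= x] = [set p in C | p <= y].
Proof.
move=> ch; rewrite /rank_in => e.
have [sub|] := boolP ([set p in C | p <= x] \subset [set p in C | p <= y]).
  by apply/eqP; rewrite eqEcard sub e leqnn.
case/subsetPn => p; rewrite !inE => /andP[pC px] /nandP[/negP//|npy].
apply/esym/eqP; rewrite eqEcard e leqnn andbT; apply/subsetP => q; rewrite !inE.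
case/andP=> qC qy; rewrite qC; case/orP: (ch q p qC pC) => [/le_trans->//|pq].
by rewrite (le_trans pq qy) in npy.
Qed.

Lemma rank_in_covers (C : {set D}) a b p : {in C, forall q, join_irrb q} ->
  ~~ (p <= a) -> (forall q, join_irrb q -> (q <= b) = (q <= a) || (q == p)) ->
  rank_in C b = (p \in C) + rank_in C a.
Proof.
move=> CJ npa hq; rewrite /rank_in.
case pC: (p \in C).
  have -> : [set q in C | q <= b] = p |: [set q in C | q <= a].
    apply/setP => q; rewrite !inE; have [->|nqp] := eqVneq q p.
      by rewrite pC hq ?CJ ?eqxx ?orbT.
    by case qC: (q \in C); rewrite //= hq ?CJ // (negbTE nqp) orbF.
  by rewrite cardsU1 inE (negbTE npa) andbF.
rewrite add0n; apply: eq_card => q; rewrite !inE.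
case qC: (q \in C); rewrite //= hq ?CJ //.
by case: eqP qC => [->|_ _]; rewrite ?pC ?orbF.
Qed.

End Covers.

Section GridPosition.
Context {d : Order.disp_t} {D : finTBDistrLatticeType d}.
Local Open Scope order_scope.
Variables C1 C2 : {set D}.
Hypotheses (ch1 : chain C1) (ch2 : chain C2) (disj12 : [disjoint C1 & C2])
  (JE : [set p | join_irrb p] = C1 :|: C2).

Definition grid_pos (x : D) := (rank_in C1 x, rank_in C2 x).

Lemma join_irr_C1C2 p : join_irrb p = (p \in C1) || (p \in C2).
Proof. by rewrite -in_setU -JE inE. Qed.

Lemma grid_pos_inj : injective grid_pos.
Proof.
move=> x y [/(chain_rank_inj ch1) e1 /(chain_rank_inj ch2) e2].
suff le_down (u v : D) : [set p in C1 | p <= u] = [set p in C1 | p <= v] ->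
    [set p in C2 | p <= u] = [set p in C2 | p <= v] -> u <= v.
  by apply: le_anti; rewrite !le_down.
move=> {}e1 {}e2; apply: le_join_irr => p; rewrite join_irr_C1C2 => /orP[pC|pC] pu.
- have : p \in [set q in C1 | q <= u] by rewrite inE pC pu.
  by rewrite e1 inE => /andP[].
- have : p \in [set q in C2 | q <= u] by rewrite inE pC pu.
  by rewrite e2 inE => /andP[].
Qed.

Lemma grid_pos_lt x y : x < y ->
  ((grid_pos x).1 + (grid_pos x).2 < (grid_pos y).1 + (grid_pos y).2)%N.
Proof.
move=> lt; have le := ltW lt.
have le1 := rank_in_le C1 le; have le2 := rank_in_le C2 le.
have : grid_pos x != grid_pos y by apply: contraTneq lt => /grid_pos_inj->; rewrite ltxx.
rewrite /= xpair_eqE negb_and => /orP[ne1|ne2].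
- by rewrite -addSn leq_add // ltn_neqAle ne1.
- by rewrite -addnS leq_add // ltn_neqAle ne2.
Qed.

Lemma grid_pos_covers a b : covers a b ->
  grid_pos b = ((grid_pos a).1.+1, (grid_pos a).2) \/
  grid_pos b = ((grid_pos a).1, (grid_pos a).2.+1).
Proof.
move=> /covers_join_irr[p [jp npa hq]].
have CJ (C : {set D}) : C \subset C1 :|: C2 -> {in C, forall q, join_irrb q}.
  by move=> /subsetP CC q /CC; rewrite join_irr_C1C2 -in_setU.
rewrite /grid_pos !(rank_in_covers (CJ _ _) npa hq) ?subsetUl ?subsetUr //=.
move: jp; rewrite join_irr_C1C2 => /orP[pC|pC].
- by left; rewrite pC (disjointFr disj12 pC).
- by right; rewrite pC (disjointFl disj12 pC).
Qed.

End GridPosition.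

Section Congruences.
Variable A : algebra.
Implicit Types (R : relation (carrier A)) (x y : carrier A).

Lemma princ_congruence x y : is_congruence (princ x y).
Proof.
split; [|split; [|split]].
- by move=> z R [refl _] _; apply: refl.
- by move=> z t zt R cR; case: (cR) => _ [sym _] xy; apply: sym; exact: zt.
- move=> z t s zt ts R cR; case: (cR) => _ [_ [trans _]] xy.
  exact: trans (zt R cR xy) (ts R cR xy).
- by move=> i u v uv R cR; case: (cR) => _ [_ [_ comp]] xy; apply: comp => k; apply: uv.
Qed.

Definition set_arg n (u : 'I_n -> carrier A) (k : 'I_n) (a : carrier A) :=
  fun j => if j == k then a else u j.

(* Move from [u] to [v] one argument at a time. *)
Lemma op_compat_of_arg (T : relation (carrier A)) :
  (forall x, T x x) -> (forall x y z, T x y -> T y z -> T x z) ->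
  (forall i (u : 'I_(arity i) -> carrier A) k a b,
     T a b -> T (op (set_arg u k a)) (op (set_arg u k b))) ->
  forall i (u v : 'I_(arity i) -> carrier A),
    (forall k, T (u k) (v k)) -> T (op u) (op v).
Proof.
move=> refl trans comp1 i u v uv.
pose mix m (k : 'I_(arity i)) := if (k < m)%N then v k else u k.
have <- : mix (arity i) = v by apply: functional_extensionality => k; rewrite /mix ltn_ord.
suff mixP m : T (op u) (op (mix m)) by apply: mixP.
elim: m => [|m IH].
  by have -> : mix 0 = u by []; apply: refl.
apply: trans IH _; have [lt_m|le_m] := ltnP m (arity i); last first.
  have -> : mix m.+1 = mix m.
    apply: functional_extensionality => j; rewrite /mix.
    by rewrite !(leq_trans (ltn_ord j)) ?(leqW le_m).
  exact: refl.
pose k := Ordinal lt_m.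
have -> : mix m = set_arg (mix m) k (u k).
  apply: functional_extensionality => j; rewrite /set_arg /mix.
  by case: eqP => // ->; rewrite ltnn.
have -> : mix m.+1 = set_arg (mix m) k (v k).
  apply: functional_extensionality => j; rewrite /set_arg /mix ltnS leq_eqVlt.
  have -> : (j == m :> nat) = (j == k) by [].
  by case: eqP => [->|].
exact: comp1 (uv k).
Qed.

Lemma rt_union_congruence (F : relation (carrier A) -> Prop) :
  (forall R, F R -> is_congruence R) ->
  is_congruence (clos_refl_trans _ (fun x y => exists2 R, F R & R x y)).
Proof.
move=> FC; set U := fun x y => _.
have symU x y : U x y -> U y x.
  by case=> R FR xy; exists R => //; case: (FC R FR) => _ [sym _]; apply: sym.
have refl x : clos_refl_trans _ U x x by apply: rt_refl.
have trans x y z : clos_refl_trans _ U x y -> clos_refl_trans _ U y z ->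
    clos_refl_trans _ U x z by apply: rt_trans.
split; [|split; [|split]] => //.
- move=> x y; elim=> [s t /symU|s|s t r _ ts _ rt]; first exact: rt_step.
  + exact: refl.
  + exact: trans rt ts.
- apply: op_compat_of_arg => // i u k a b; elim=> [s t [R FR st]|s|s t r _ IH1 _ IH2].
  + apply/rt_step; exists R => //; case: (FC R FR) => [rR [_ [_ comp]]].
    by apply: comp => j; rewrite /set_arg; case: (j == k).
  + exact: refl.
  + exact: trans IH1 IH2.
Qed.

End Congruences.

Section ConIso.
Context (A : algebra) {d : Order.disp_t} {D : finTBDistrLatticeType d}.
Variable phi : relation (carrier A) -> D.
Hypothesis iso : con_iso phi.
Local Open Scope order_scope.
Implicit Types (R : relation (carrier A)) (x y z : carrier A).

Lemma con_iso_le R S : is_congruence R -> is_congruence S ->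
  (forall x y, R x y -> S x y) -> phi R <= phi S.
Proof. by move=> cR cS; apply: (proj1 (proj1 iso R S cR cS)). Qed.

Lemma con_iso_princ_le R x y : is_congruence R ->
  (phi (princ x y) <= phi R) <-> R x y.
Proof.
move=> cR; split=> [le_xy|Rxy].
  by apply: (proj2 (proj1 iso _ _ (princ_congruence x y) cR) le_xy) => S _.
apply: (con_iso_le (princ_congruence x y) cR) => s t st; exact: st R cR Rxy.
Qed.

Lemma con_iso_princ_le_rel R x y : is_congruence R -> R x y -> phi (princ x y) <= phi R.
Proof. by move=> cR /(con_iso_princ_le _ _ cR). Qed.

Lemma con_iso_princxx x : phi (princ x x) = \bot.
Proof.
have [R0 [cR0 R0_bot]] := proj2 iso \bot.
apply/le_anti; rewrite le0x andbT -R0_bot.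
by apply/con_iso_princ_le_rel => //; case: cR0.
Qed.

Lemma con_iso_princ_trans x y z :
  phi (princ x z) <= phi (princ x y) `|` phi (princ y z).
Proof.
have [V [cV VE]] := proj2 iso (phi (princ x y) `|` phi (princ y z)).
rewrite -VE; apply: con_iso_princ_le_rel => //.
have /(con_iso_princ_le _ _ cV) Vxy : phi (princ x y) <= phi V by rewrite VE leUl.
have /(con_iso_princ_le _ _ cV) Vyz : phi (princ y z) <= phi V by rewrite VE leUr.
by case: cV => _ [_ [trans _]]; apply: trans Vxy Vyz.
Qed.

End ConIso.

Section Antichain3.
Context {d : Order.disp_t} {D : finTBDistrLatticeType d}.
Local Open Scope order_scope.
Variables a b c : D.
Hypotheses (ja : join_irrb a) (jb : join_irrb b) (jc : join_irrb c).
Hypothesis abc_antichain : ~~ [|| a >=< b, b >=< c | a >=< c].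

Let w := a `|` b `|` c.

Lemma antichain_le :
  ((a <= b) = false) * ((b <= a) = false) * ((b <= c) = false) *
  ((c <= b) = false) * ((a <= c) = false) * ((c <= a) = false).
Proof.
by move: abc_antichain; rewrite !negb_or => /and3P[/andP[/negbTE-> /negbTE->]
  /andP[/negbTE-> /negbTE->] /andP[/negbTE-> /negbTE->]].
Qed.

Lemma abc_le_w (p : D) : p \in [:: a; b; c] -> p <= w.
Proof.
rewrite !inE /w => /or3P[]/eqP->; [exact/lexUl/leUl | exact/lexUl/leUr | exact: leUr].
Qed.

Definition at_most_one_below (x : D) :=
  ~~ [|| (a <= x) && (b <= x), (b <= x) && (c <= x) | (a <= x) && (c <= x)].

Lemma at_most_one_below_le (x y : D) :
  x <= y -> at_most_one_below y -> at_most_one_below x.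
Proof.
move=> xy; apply: contra; have le u : u <= x -> u <= y by move/le_trans; apply.
by case/or3P=> /andP[/le-> /le->]; rewrite ?orbT.
Qed.

Lemma at_most_one_below_abc (p : D) : p \in [:: a; b; c] -> at_most_one_below p.
Proof.
by rewrite !inE /at_most_one_below => /or3P[]/eqP->; rewrite !antichain_le !lexx.
Qed.

Lemma at_most_one_below0 : at_most_one_below \bot.
Proof.
by apply: at_most_one_below_le (le0x a) (at_most_one_below_abc _); rewrite inE eqxx.
Qed.

Lemma at_most_one_below_join_irr (p : D) :
  join_irrb p -> p <= w -> at_most_one_below p.
Proof.
move=> jp pw; have [t t_abc pt] : exists2 t, t \in [:: a; b; c] & p <= t.
  case/orP: (join_irr_prime jp pw) => [/(join_irr_prime jp)/orP[]|] pt;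
  by eexists; last exact: pt; rewrite !inE eqxx ?orbT.
exact: at_most_one_below_le pt (at_most_one_below_abc t_abc).
Qed.

Lemma at_most_one_below_join (x y : D) :
  at_most_one_below x -> at_most_one_below y -> ~~ (w <= x `|` y).
Proof.
move=> one_x one_y; apply/negP; rewrite !leUx => /andP[/andP[a_xy b_xy] c_xy].
move: (join_irr_prime ja a_xy) (join_irr_prime jb b_xy) (join_irr_prime jc c_xy) one_x one_y.
(* Pigeonhole: two of [a], [b], [c] lie below [x] or two below [y]. *)
rewrite /at_most_one_below.
by case: (a <= x); case: (a <= y); case: (b <= x); case: (b <= y);
   case: (c <= x); case: (c <= y).
Qed.

Lemma at_most_one_below_w : ~~ at_most_one_below w.
Proof. by rewrite /at_most_one_below negbK -leUx leUl. Qed.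

Let Q : {set D} := [set x : D | join_irrb x || (x \in [:: \bot; \top; w])].

Lemma at_most_one_below_step (x y p : D) : y \in Q -> x <= w -> at_most_one_below x ->
  p \in [:: a; b; c] -> y <= x `|` p -> (y <= w) && at_most_one_below y.
Proof.
move=> yQ xw one_x p_abc yxp.
have xpw : x `|` p <= w by rewrite leUx xw abc_le_w.
have yw := le_trans yxp xpw; rewrite yw /=.
move: yQ; rewrite !inE => /orP[jy|/or3P[]/eqP yE]; first exact: at_most_one_below_join_irr.
- by rewrite yE at_most_one_below0.
- have := at_most_one_below_join one_x (at_most_one_below_abc p_abc).
  by rewrite (le_trans _ yxp) // yE lex1.
- have := at_most_one_below_join one_x (at_most_one_below_abc p_abc).
  by rewrite -yE yxp.
Qed.

Lemma fully_A1_representable_antichain3 : ~ fully_A1_representable D.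
Proof.
move=> /(_ Q) []; first by move=> x [/join_irrP jx|[]->]; rewrite inE ?jx ?inE ?eqxx ?orbT.
move=> A [phi [iso princQ]].
pose F R := is_congruence R /\ phi R \in [:: a; b; c].
pose T := clos_refl_trans _ (fun x y => exists2 R, F R & R x y).
have cT : is_congruence T by apply: rt_union_congruence => R [].
have abc_T u : u \in [:: a; b; c] -> u <= phi T.
  move=> u_abc; have [R [cR RE]] := proj2 iso u; rewrite -RE.
  apply: (con_iso_le iso cR cT) => x y Rxy; apply: rt_step; exists R => //.
  by split; rewrite ?RE.
have [x0 [y0 x0y0_w]] : exists x0 y0, phi (princ x0 y0) = w.
  by apply/princQ; rewrite inE !inE eqxx !orbT.
have inv z : clos_refl_trans_n1 _ (fun x y => exists2 R, F R & R x y) x0 z ->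
    (phi (princ x0 z) <= w) && at_most_one_below (phi (princ x0 z)).
  elim=> [|y {}z [R [cR R_abc] Ryz] _ /andP[yw one_y]].
    by rewrite con_iso_princxx // le0x at_most_one_below0.
  apply: at_most_one_below_step yw one_y R_abc _.
  - by apply/princQ; exists x0, z.
  - apply: le_trans (con_iso_princ_trans iso x0 y z) _.
    by rewrite leU2 // (con_iso_princ_le_rel iso cR).
have /(con_iso_princ_le iso _ _ cT)/clos_rt_rtn1_iff/inv : phi (princ x0 y0) <= phi T.
  by rewrite x0y0_w !leUx !abc_T // !inE eqxx ?orbT.
by rewrite x0y0_w => /andP[_]; apply/negP/at_most_one_below_w.
Qed.

End Antichain3.

Lemma fully_A1_representable_width2 {d : Order.disp_t} (D : finTBDistrLatticeType d) :
  fully_A1_representable D -> width2 [set x : D | join_irrb x].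
Proof.
move=> full x y z; rewrite !inE => jx jy jz; apply: contraT => anti.
by case: (fully_A1_representable_antichain3 jx jy jz anti).
Qed.

Section GridDrawing.
Local Open Scope R_scope.

(* The grid point [(al, be)], rotated so that the height [al + be] grows in both directions. *)
Definition pt (al be : R) : point := (al - be, al + be).

Lemma pt_inj al be al' be' : pt al be = pt al' be' -> al = al' /\ be = be'.
Proof. by case=> h1 h2; split; lra. Qed.

Lemma on_segment_pt p al be al' be' : on_segment p (pt al be) (pt al' be') ->
  exists t, 0 <= t <= 1 /\ p = pt (al + t * (al' - al)) (be + t * (be' - be)).
Proof.
by case=> t [t0 [t1 ->]]; exists t; split; [lra | rewrite /pt /=; f_equal; ring].
Qed.

Lemma INR_between (m n : nat) t : 0 <= t <= 1 -> INR m = INR n + t -> m = n \/ m = n.+1.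
Proof.
move=> t01 e.
have h1 : (n <= m)%coq_nat by apply: INR_le; lra.
have h2 : (m <= n.+1)%coq_nat by apply: INR_le; rewrite S_INR; lra.
lia.
Qed.

Lemma INR_overlap (m n : nat) t s : 0 <= t <= 1 -> 0 <= s <= 1 ->
  INR m + t = INR n + s -> m = n \/ exists k : nat, INR m + t = INR k.
Proof.
move=> t01 s01 e; have [->|mn] := eqVneq m n; [by left | right].
have h1 : (n <= m.+1)%coq_nat by apply: INR_le; rewrite S_INR; lra.
have h2 : (m <= n.+1)%coq_nat by apply: INR_le; rewrite S_INR; lra.
have [nE|mE] : n = m.+1 \/ m = n.+1 by move/eqP: mn; lia.
- exists m.+1; rewrite S_INR; move: e; rewrite nE S_INR; lra.
- exists m; move: e; rewrite mE S_INR; lra.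
Qed.

Variables (T : Type) (E : T -> T -> Prop) (pos : T -> nat * nat).
Hypothesis pos_inj : injective pos.
Hypothesis edge_step : forall a b, E a b ->
  pos b = ((pos a).1.+1, (pos a).2) \/ pos b = ((pos a).1, (pos a).2.+1).

Definition grid_draw x := pt (INR (pos x).1) (INR (pos x).2).

Lemma eq_of_pos x y : (pos x).1 = (pos y).1 -> (pos x).2 = (pos y).2 -> x = y.
Proof.
by move=> e1 e2; apply: pos_inj; rewrite [pos x]surjective_pairing e1 e2 -surjective_pairing.
Qed.

Lemma grid_draw_inj : injective grid_draw.
Proof. by move=> x y /pt_inj[/INR_eq e1 /INR_eq e2]; apply: eq_of_pos. Qed.

Lemma on_edge a b p : E a b -> on_segment p (grid_draw a) (grid_draw b) ->
  exists t, 0 <= t <= 1 /\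
   (pos b = ((pos a).1.+1, (pos a).2) /\ p = pt (INR (pos a).1 + t) (INR (pos a).2) \/
    pos b = ((pos a).1, (pos a).2.+1) /\ p = pt (INR (pos a).1) (INR (pos a).2 + t)).
Proof.
move=> /edge_step step /on_segment_pt[t [t01 ->]]; exists t; split=> //.
rewrite /grid_draw; case: step => ->; [left | right]; split=> //;
by rewrite [(_, _).1]/= [(_, _).2]/= S_INR; congr pt; ring.
Qed.

Lemma grid_point_on_edge a b m n : E a b ->
  on_segment (pt (INR m) (INR n)) (grid_draw a) (grid_draw b) ->
  (m, n) = pos a \/ (m, n) = pos b.
Proof.
move=> ab /(on_edge ab)[t [t01 [[-> /pt_inj[em en]]|[-> /pt_inj[em en]]]]].
- move/INR_eq: en => ->.
  by case: (INR_between t01 em) => ->; rewrite -?surjective_pairing; [left | right].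
- move/INR_eq: em => ->.
  by case: (INR_between t01 en) => ->; rewrite -?surjective_pairing; [left | right].
Qed.

Lemma grid_draw_vertex_on_edge v a b : E a b ->
  on_segment (grid_draw v) (grid_draw a) (grid_draw b) -> v = a \/ v = b.
Proof.
move=> ab /(grid_point_on_edge ab); rewrite -surjective_pairing.
by case=> /pos_inj; [left | right].
Qed.

Lemma common_grid_point a b c e m n : E a b -> E c e ->
  on_segment (pt (INR m) (INR n)) (grid_draw a) (grid_draw b) ->
  on_segment (pt (INR m) (INR n)) (grid_draw c) (grid_draw e) ->
  exists x, (x = a \/ x = b) /\ (x = c \/ x = e) /\ pt (INR m) (INR n) = grid_draw x.
Proof.
move=> ab ce /(grid_point_on_edge ab) mn_ab /(grid_point_on_edge ce) mn_ce.
have vE x : (m, n) = pos x -> pt (INR m) (INR n) = grid_draw x.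
  by rewrite /grid_draw => <-.
have same x y : (m, n) = pos x -> (m, n) = pos y -> x = y by move=> -> /pos_inj.
case: mn_ab => [mx|mx]; [exists a | exists b];
by case: mn_ce => /(same _ _ mx) <-; auto.
Qed.

Lemma grid_draw_edges_meet a b c e : E a b -> E c e -> (a, b) <> (c, e) ->
  forall p, on_segment p (grid_draw a) (grid_draw b) ->
  on_segment p (grid_draw c) (grid_draw e) ->
  exists x, (x = a \/ x = b) /\ (x = c \/ x = e) /\ p = grid_draw x.
Proof.
move=> ab ce abce p p_ab p_ce.
have grid m n : p = pt (INR m) (INR n) -> exists x,
    (x = a \/ x = b) /\ (x = c \/ x = e) /\ p = grid_draw x.
  by move=> pE; rewrite pE in p_ab p_ce *; apply: common_grid_point.
have [t [t01 [[bE pE]|[bE pE]]]] := on_edge ab p_ab;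
have [s [s01 [[eE qE]|[eE qE]]]] := on_edge ce p_ce;
move: (qE); rewrite {1}pE => /pt_inj[e1 e2].
- move/INR_eq: e2 => e2; case: (INR_overlap t01 s01 e1) => [e1'|[k kE]].
    by case: abce; rewrite (eq_of_pos e1' e2) (@eq_of_pos b e) ?bE ?eE /= ?e1' ?e2.
  by apply: (grid k (pos a).2); rewrite pE kE.
- by apply: (grid (pos c).1 (pos a).2); rewrite pE e1.
- by apply: (grid (pos a).1 (pos c).2); rewrite qE -e1.
- move/INR_eq: e1 => e1; case: (INR_overlap t01 s01 e2) => [e2'|[k kE]].
    by case: abce; rewrite (eq_of_pos e1 e2') (@eq_of_pos b e) ?bE ?eE /= ?e1 ?e2'.
  by apply: (grid (pos a).1 k); rewrite pE kE.
Qed.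

End GridDrawing.

Theorem lemma4p1 (d : Order.disp_t) (D : finTBDistrLatticeType d) :
  fully_A1_representable D -> planar D.
Proof.
move=> /fully_A1_representable_width2/dilworth2[C1 [C2 [ch1 ch2 disj JE]]].
have pos_inj := grid_pos_inj ch1 ch2 JE.
have step := grid_pos_covers disj JE.
exists (grid_draw (grid_pos C1 C2)); split; first exact: (grid_draw_inj pos_inj).
split.
  move=> x y /(grid_pos_lt ch1 ch2 JE)/ssrnat.ltP lt_xy.
  by rewrite /grid_draw /pt /= -!plus_INR; apply: lt_INR.
split=> [v a b|a b c e].
- exact: grid_draw_vertex_on_edge pos_inj step v a b.
- exact: grid_draw_edges_meet pos_inj step a b c e.
Qed.
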